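(* In the depth-3 instance described below, let $s_e$ denote the probability that the edge $e$ belongs to the set $A$ produced by the shadow distribution. Then for every edge $e\in E$, $x_e\le s_e\le 6x_e$.
   Context: Depth-3 instance: fix a small constant $\rho>0$ and a large integer $m$ with $\rho m\in\mathbb N$, ground set $[m]$. Layers: $L_0=\{s\}$ ($S_s=\emptyset$); $L_1$ has one vertex $u$ for each $S_u\subseteq[m]$ with $|S_u|=\rho m$; $L_2$ one vertex for each subset of size $2\rho m$; $L_3$ (the sinks) one vertex for each subset of size $\rho m$. Edges: $s$ to every vertex of $L_1$; $(u,v)$ with $u\in L_1,v\in L_2$ iff $S_u\subseteq S_v$; $(u,v)$ with $u\in L_2,v\in L_3$ iff $S_v\subseteq S_u$. For an edge $e=(u,v)$ write $S_e=S_v$, and say $e\in L_i$ if $v\in L_i$. $D(e)$ denotes the set of edges $(a,b)$ such that $a$ is reachable by a directed path (possibly of length 0) from the endpoint of $e$. Assignment solution: $x_e=\binom{(1-\rho)m}{\rho m}^{-1}$ for $e\in L_1$, $x_e=\binom{(1-\rho)m}{\rho m}^{-1}\binom{2\rho m}{\rho m}^{-1}$ for $e\in L_2$, $x_e=\binom{(1-\rho)m}{\rho m}^{-1}$ for $e\in L_3$. Subtree solutions $x^{(e)}$: for $e\in L_1$, $x^{(e)}_{e'}=1$ if $e'=e$; $\binom{2\rho m}{\rho m}^{-1}$ if $e'\in L_2\cap D(e)$; $\frac{\binom{(1-\rho)m}{\rho m}}{\binom{m}{\rho m}}\binom{m-2\rho m+|S_{e'}\cap S_e|}{|S_{e'}\cap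 S_e|}^{-1}$ if $e'\in L_3\cap D(e)$; $0$ otherwise. For $e\in L_2$, $x^{(e)}_{e'}=1$ if $e'=e$ or $e'\in L_3\cap D(e)$, else $0$. For $e\in L_3$, $x^{(e)}_{e'}=1$ iff $e'=e$, else $0$. Shadow distribution: choose a random set $S$ containing each edge $e$ independently with probability $x_e$; for each $e\in S$ independently draw a set $S_e$ containing each edge $e'$ independently with probability $x^{(e)}_{e'}$; output $A=\bigcup_{e\in S}S_e$. *)

From HB Require Import structures.
From mathcomp Require Import all_boot all_order all_algebra.
Set Implicit Arguments. Unset Strict Implicit. Unset Printing Implicit Defensive.
Import Order.TTheory GRing.Theory Num.Theory.
Local Open Scope ring_scope.

(* Depth-3 instance.  Ground set [m] = 'I_m ; k = rho * m (so rho = k/m).  *)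
Section Depth3.
Variables (R : realFieldType) (m k : nat).

Definition vtx : finType := ('I_4 * {set 'I_m})%type.
Definition layer (v : vtx) : nat := val v.1.
Definition Sv (v : vtx) : {set 'I_m} := v.2.

Definition valid_vtx (v : vtx) : bool :=
  match layer v with
  | 0 => Sv v == set0
  | 1 => #|Sv v| == k
  | 2 => #|Sv v| == k.*2
  | _ => #|Sv v| == k
  end.

Definition adj (u v : vtx) : bool :=
  [&& valid_vtx u, valid_vtx v &
   [|| (layer u == 0%N) && (layer v == 1%N),
       [&& layer u == 1%N, layer v == 2%N & Sv u \subset Sv v] |
       [&& layer u == 2%N, layer v == 3%N & Sv v \subset Sv u]]].

Definition edge : finType := {p : vtx * vtx | adj p.1 p.2}.
Definition tail (e : edge) : vtx := (val e).1.
Definition head (e : edge) : vtx := (val e).2.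
Definition Se (e : edge) : {set 'I_m} := Sv (head e).
Definition elayer (e : edge) : nat := layer (head e).

Definition reach : rel vtx := connect adj.
Definition inD (e f : edge) : bool := reach (head e) (tail f).

Definition binR (n r : nat) : R := ('C(n, r))%:R.

Definition xa (e : edge) : R :=
  match elayer e with
  | 2 => (binR (m - k) k)^-1 * (binR k.*2 k)^-1
  | _ => (binR (m - k) k)^-1   (* layers 1 and 3 *)
  end.

Definition xsub (e e' : edge) : R :=
  match elayer e with
  | 1 =>
      if e' == e then 1
      else if inD e e' then
        match elayer e' with
        | 2 => (binR k.*2 k)^-1
        | 3 => let j := #|Se e' :&: Se e| in
               (binR (m - k) k / binR m k) * (binR (m - k.*2 + j) j)^-1
        | _ => 0
        end
      else 0
  | 2 => if (e' == e) || ((elayer e' == 3%N) && inD e e') then 1 else 0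
  | _ => if e' == e then 1 else 0
  end.

Definition setprob (p : edge -> R) (T : {set edge}) : R :=
  \prod_(f : edge) (if f \in T then p f else 1 - p f).

(* An outcome is (S, F): S is the random set of edges,
   F e is the set S_e drawn for e (drawn for every e, but only used when
   e \in S, which does not change the distribution of A). *)
Definition outcome : finType := ({set edge} * {ffun edge -> {set edge}})%type.

Definition shadow_weight (w : outcome) : R :=
  setprob xa w.1 * \prod_(e : edge) setprob (xsub e) (w.2 e).

Definition shadowA (w : outcome) : {set edge} := \bigcup_(e in w.1) w.2 e.

Definition s_prob (e : edge) : R :=
  \sum_(w : outcome) shadow_weight w * (e \in shadowA w)%:R.

End Depth3.

From Pilot Require Import Defs.
From HB Require Import structures.
From mathcomp Require Import all_boot all_order all_algebra.
From mathcomp Require Import zify ring lra.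
Import Order.TTheory GRing.Theory Num.Theory.
Set Implicit Arguments. Unset Strict Implicit. Unset Printing Implicit Defensive.
Local Open Scope ring_scope.

(* The set A is the union of the S_f over f ∈ S, and independence gives
   Pr[f ∈ S, e ∈ S_f] = x_f x^(f)_e.  Taking f = e yields s_e ≥ x_e, and the union
   bound yields s_e ≤ Σ_f x_f x^(f)_e.  Grouped by the layer of f, this sum has at
   most x_e in each of the three layers, so s_e ≤ 3 x_e.  Within a layer at most one f
   contributes, except for e ∈ L_3: there the L_2-edges into the tail of e number
   C(2ρm, ρm), and the L_1-edges f with S_f inside the tail of e, grouped by
   j = |S_f ∩ S_e|, give a sum that trinomial revision turns into Vandermonde's
   identity. *)

Lemma mul_bin_revision a b c : (c <= b <= a)%N ->
  ('C(a, b) * 'C(b, c) = 'C(a, c) * 'C(a - c, b - c))%N.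
Proof.
move=> /andP[cb ba]; have ca : (c <= a)%N := leq_trans cb ba.
have fact_pos : (0 < c`! * (b - c)`! * (a - b)`!)%N by rewrite !muln_gt0 !fact_gt0.
apply/eqP; rewrite -(eqn_pmul2r fact_pos); apply/eqP.
have -> : ('C(a, b) * 'C(b, c) * (c`! * (b - c)`! * (a - b)`!)
          = 'C(a, b) * ('C(b, c) * (c`! * (b - c)`!)) * (a - b)`!)%N by ring.
rewrite bin_fact // -mulnA bin_fact //.
have -> : (a - b = (a - c) - (b - c))%N by lia.
have -> : ('C(a, c) * 'C(a - c, b - c) * (c`! * (b - c)`! * ((a - c) - (b - c))`!)
          = 'C(a, c) * ('C(a - c, b - c) * ((b - c)`! * ((a - c) - (b - c))`!)) * c`!)%N
  by ring.
by rewrite bin_fact ?leq_sub2r // -mulnA [((a - c)`! * _)%N]mulnC bin_fact.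
Qed.

Lemma sum_bin_div_bin (R : numFieldType) n k :
  \sum_(j < k.+1) ('C(k, j) * 'C(k, k - j))%:R / ('C(n + j, j)%:R : R)
  = 'C(n + k + k, k)%:R / 'C(n + k, k)%:R.
Proof.
have bin_neq0 a b : (b <= a)%N -> ('C(a, b)%:R : R) != 0.
  by move=> ba; rewrite pnatr_eq0 -lt0n bin_gt0.
transitivity (\sum_(j < k.+1) ('C(k, j) * 'C(n + k, k - j))%:R / ('C(n + k, k)%:R : R)).
  apply: eq_bigr => j _; have jk : (j <= k)%N by rewrite -ltnS.
  have := @mul_bin_revision (n + k) k (k - j); rewrite leq_subr leq_addl => /(_ isT).
  have -> : (n + k - (k - j) = n + j)%N by lia.
  have -> : (k - (k - j) = j)%N by lia.
  move=> revision; rewrite !natrM -!mulrA; congr (_ * _).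
  apply/eqP; rewrite eqr_div ?bin_neq0 ?leq_addl // -!natrM eqr_nat.
  by rewrite mulnC revision.
by rewrite -mulr_suml -natr_sum binomial.Vandermonde addnC.
Qed.

Section DrawsByMeet.
Variables (T : finType) (V W : {set T}).
Hypothesis WV : W \subset V.

Lemma card_draws_meet n j : (j <= n)%N ->
  #|[set U : {set T} | [&& U \subset V, #|U| == n & #|U :&: W| == j]]|
  = ('C(#|W|, j) * 'C(#|V :\: W|, n - j))%N.
Proof.
move=> jn.
pose A := [set J : {set T} | J \subset W & #|J| == j].
pose B := [set K : {set T} | K \subset V :\: W & #|K| == (n - j)%N].
have parts JK : JK \in setX A B ->
    (JK.1 :|: JK.2) :&: W = JK.1 /\ (JK.1 :|: JK.2) :\: W = JK.2.
  case: JK => J K; rewrite !inE /= => /andP[/andP[JW _] /andP[]].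
  rewrite subsetD => /andP[_ KW] _; split.
    by rewrite setIUl (setIidPl JW) (disjoint_setI0 KW) setU0.
  by rewrite setDUl (setDidPl KW) (eqP (_ : J :\: W == set0)) ?set0U // setD_eq0.
have -> : [set U : {set T} | [&& U \subset V, #|U| == n & #|U :&: W| == j]]
    = (fun JK => JK.1 :|: JK.2) @: setX A B.
  apply/setP => U; rewrite inE; apply/and3P/imsetP.
    case=> UV /eqP Un /eqP Uj; exists (U :&: W, U :\: W); last by rewrite /= setID.
    by rewrite !inE /= subsetIr Uj eqxx setSD //= -Un -(cardsID W U) Uj addKn.
  case=> -[J K] JK ->; have [JKW JKW'] := parts _ JK.
  move: JK; rewrite !inE /= => /andP[/andP[JW /eqP Jj] /andP[KVW /eqP Kn]].
  rewrite subUset (subset_trans JW WV) (subset_trans KVW (subsetDl V W)) JKW Jj.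
  by rewrite -(cardsID W (J :|: K)) JKW JKW' Jj Kn subnKC.
rewrite card_in_imset ?cardsX ?cards_draws //.
move=> [J1 K1] [J2 K2] /parts[/= JW1 KW1] /parts[/= JW2 KW2] /= E.
by congr (_, _); [rewrite -JW1 -JW2 | rewrite -KW1 -KW2]; rewrite E.
Qed.

Lemma sum_draws_by_meet (M : nmodType) n (G : nat -> M) :
  \sum_(U : {set T} | (U \subset V) && (#|U| == n)) G #|U :&: W|
  = \sum_(j < n.+1) G j *+ ('C(#|W|, j) * 'C(#|V :\: W|, n - j)).
Proof.
have meet_small (U : {set T}) : #|U| == n -> (#|U :&: W| < n.+1)%N.
  by move/eqP <-; rewrite ltnS subset_leq_card ?subsetIl.
rewrite (partition_big (fun U => inord #|U :&: W| : 'I_n.+1) xpredT) //=.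
apply: eq_bigr => j _.
rewrite (eq_bigl (fun U => U \in [set U : {set T} | [&& U \subset V, #|U| == n & #|U :&: W| == j]])).
  rewrite (eq_bigr (fun=> G j)) => [|U]; last by rewrite inE => /and3P[_ _ /eqP ->].
  by rewrite sumr_const card_draws_meet // -ltnS.
move=> U; rewrite !inE; apply/idP/and3P.
  by case/andP=> /andP[UV Un] /eqP <-; rewrite inordK ?meet_small.
case=> UV Un /eqP Uj; rewrite UV Un; apply/eqP/val_inj.
by rewrite /= inordK ?meet_small // Uj.
Qed.

End DrawsByMeet.

Section SumBounds.
Variables (R : numDomainType) (I : finType).

Lemma ler_sum_unique_support (P : pred I) (t : I -> R) c : 0 <= c ->
    {in P &, forall i j, t i != 0 -> t j != 0 -> i = j} ->
    {in P, forall i, t i != 0 -> t i <= c} ->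
  \sum_(i | P i) t i <= c.
Proof.
move=> c_ge0 t_uniq t_le.
case: (pickP (fun i => P i && (t i != 0))) => [i /andP[Pi ti] | t0]; last first.
  by rewrite big1 // => i Pi; have := t0 i; rewrite Pi => /negbFE/eqP.
rewrite (bigD1 i) //= big1 ?addr0 ?t_le // => j /andP[Pj ji].
by apply/eqP; apply: contraNT ji => tj; apply/eqP; apply: t_uniq.
Qed.

Lemma ler_sum_inj (J : finType) (P : pred I) (Q : pred J) (h : I -> J) (g : J -> R) :
    {in P &, injective h} -> {in P, forall i, Q (h i)} -> {in Q, forall j, 0 <= g j} ->
  \sum_(i | P i) g (h i) <= \sum_(j | Q j) g j.
Proof.
move=> h_inj PQ g_ge0; rewrite -(big_imset _ h_inj) /=.
rewrite big_mkcond [leRHS]big_mkcond /=; apply: ler_sum => j _.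
case: (boolP (j \in h @: P)) => [/imsetP[i Pi ->] | _]; first by rewrite PQ.
by case: (boolP (Q j)) => // /g_ge0.
Qed.

End SumBounds.

Lemma invr_nat_ge0_le1 (R : numFieldType) n : 0 <= (n%:R : R)^-1 <= 1.
Proof.
case: n => [|n]; first by rewrite invr0 lexx ler01.
by rewrite invr_ge0 ler0n invf_le1 ?ltr0Sn // ler1n.
Qed.

Lemma mulr_ge0_le1 (R : numDomainType) (x y : R) : 0 <= x <= 1 -> 0 <= y <= 1 -> 0 <= x * y <= 1.
Proof. by move=> /andP[x0 x1] /andP[y0 y1]; rewrite mulr_ge0 // mulr_ile1. Qed.

Lemma divr_nat_ge0_le1 (R : numFieldType) a b : (a <= b)%N -> 0 <= (a%:R : R) / b%:R <= 1.
Proof.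
case: b => [|b] ab; first by rewrite invr0 mulr0 lexx ler01.
by rewrite divr_ge0 ?ler0n //= ler_pdivrMr ?ltr0Sn // mul1r ler_nat.
Qed.

Lemma sum_set_prod (R : comPzSemiRingType) (I : finType) (F : I -> bool -> R) :
  \sum_(T : {set I}) \prod_i F i (i \in T) = \prod_i (F i true + F i false).
Proof.
under [RHS]eq_bigr do rewrite -big_bool.
rewrite bigA_distr_bigA /= (reindex (fun g : {ffun I -> bool} => [set i | g i])) /=.
  by apply: eq_bigr => g _; apply: eq_bigr => i _; rewrite inE.
exists (fun T : {set I} => [ffun i => i \in T]) => [g _ | T _].
  by apply/ffunP => i; rewrite ffunE inE.
by apply/setP => i; rewrite inE ffunE.
Qed.

Section Shadow.
Variables (R : realFieldType) (m k : nat).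
Implicit Types (e f a : edge m k) (p : edge m k -> R).

Lemma sum_setprob p : \sum_T setprob p T = 1.
Proof.
rewrite (sum_set_prod (fun i (b : bool) => if b then p i else 1 - p i)).
by rewrite big1 // => i _; rewrite subrKC.
Qed.

Lemma sum_setprob_mem p a : \sum_T setprob p T * (a \in T)%:R = p a.
Proof.
pose F i (b : bool) := (if b then p i else 1 - p i) * (if i == a then b%:R else 1).
transitivity (\sum_(T : {set edge m k}) \prod_i F i (i \in T)).
  apply: eq_bigr => T _; rewrite big_split /= [X in _ = _ * X](bigD1 a) //= eqxx.
  by rewrite [X in _ = _ * (_ * X)]big1 ?mulr1 // => i /negbTE ->.
rewrite sum_set_prod (bigD1 a) //= /F eqxx mulr1 mulr0 addr0 big1 ?mulr1 //.
by move=> i /negbTE ->; rewrite !mulr1 subrKC.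
Qed.

Lemma setprob_ge0 p T : (forall f, 0 <= p f <= 1) -> 0 <= setprob p T.
Proof.
move=> p01; apply: prodr_ge0 => f _; have /andP[p_ge0 p_le1] := p01 f.
by case: (f \in T); rewrite ?subr_ge0.
Qed.

Lemma xa_ge0_le1 e : 0 <= xa R e <= 1.
Proof.
rewrite /xa; case: (elayer e) => [|[|[|n]]]; rewrite ?invr_nat_ge0_le1 //.
by apply: mulr_ge0_le1; apply: invr_nat_ge0_le1.
Qed.

Lemma xsub_ge0_le1 e f : 0 <= xsub R e f <= 1.
Proof.
have bool01 (b : bool) : 0 <= (if b then 1 else 0 : R) <= 1 by case: b; rewrite lexx ler01.
rewrite /xsub; case: (elayer e) => [|[|[|n]]]; try exact: bool01.
case: (f == e); first by rewrite lexx ler01.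
case: (inD e f); last by rewrite lexx ler01.
case: (elayer f) => [|[|[|[|n]]]]; rewrite ?lexx ?ler01 ?invr_nat_ge0_le1 //.
apply: mulr_ge0_le1; last exact: invr_nat_ge0_le1.
by apply: divr_nat_ge0_le1; apply: leq_bin2l; apply: leq_subr.
Qed.

Lemma xsub_diag e : xsub R e e = 1.
Proof. by rewrite /xsub eqxx; case: (elayer e) => [|[|[|n]]]. Qed.

Lemma shadow_weight_ge0 (w : outcome m k) : 0 <= shadow_weight R w.
Proof.
apply: mulr_ge0; first by apply: setprob_ge0 => f; apply: xa_ge0_le1.
by apply: prodr_ge0 => e _; apply: setprob_ge0 => f; apply: xsub_ge0_le1.
Qed.

Lemma shadow_joint f a :
  \sum_(w : outcome m k) shadow_weight R w * ((f \in w.1) && (a \in w.2 f))%:R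
  = xa R f * xsub R f a.
Proof.
pose G e (X : {set edge m k}) :=
  setprob (xsub R e) X * (if e == f then (a \in X)%:R else 1).
have prodG (F : {ffun edge m k -> {set edge m k}}) :
    \prod_e G e (F e) = \prod_e setprob (xsub R e) (F e) * (a \in F f)%:R.
  rewrite big_split /=; congr (_ * _).
  by rewrite (bigD1 f) //= eqxx big1 ?mulr1 // => e /negbTE ->.
transitivity (\sum_(S : {set edge m k}) \sum_(F : {ffun edge m k -> {set edge m k}})
                (setprob (@xa R m k) S * (f \in S)%:R) * \prod_e G e (F e)).
  rewrite pair_bigA; apply: eq_bigr => -[S F] _ /=.
  by rewrite prodG /shadow_weight -mulnb natrM /=; ring.
rewrite -big_distrlr /= sum_setprob_mem -(bigA_distr_bigA G) /= (bigD1 f) //=.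
rewrite /G eqxx sum_setprob_mem big1 ?mulr1 // => e /negbTE ef.
by rewrite ef (eq_bigr _ (fun _ _ => mulr1 _)) sum_setprob.
Qed.

Lemma xa_le_s_prob e : xa R e <= s_prob R e.
Proof.
rewrite -[leLHS]mulr1 -(xsub_diag e) -shadow_joint.
apply: ler_sum => w _; rewrite ler_wpM2l ?shadow_weight_ge0 // ler_nat.
case: (boolP ((e \in w.1) && (e \in w.2 e))) => // /andP[eS eF].
by rewrite (_ : e \in shadowA w) //; apply/bigcupP; exists e.
Qed.

Lemma s_prob_le_sum e : s_prob R e <= \sum_f xa R f * xsub R f e.
Proof.
under [leRHS]eq_bigr do rewrite -shadow_joint.
rewrite exchange_big /=; apply: ler_sum => w _.
rewrite -big_distrr /= ler_wpM2l ?shadow_weight_ge0 //.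
case: (boolP (e \in shadowA w)) => [/bigcupP[f fS eF] | _]; last exact: sumr_ge0.
by rewrite (bigD1 f) //= fS eF lerDl sumr_ge0.
Qed.

End Shadow.

Lemma connect_invariant (T : finType) (e : rel T) (P : T -> Prop) x :
  P x -> (forall y z, P y -> e y z -> P z) -> forall y, connect e x y -> P y.
Proof.
move=> Px step y /connectP[p xp ->] {y}.
by elim: p x Px xp => //= z p IH x Px /andP[xz zp]; apply: IH (step _ _ Px xz) zp.
Qed.

Section Graph.
Variables (m k : nat).
Implicit Types (u v : vtx m) (e f g : edge m k).

Lemma adj_cases u v : adj k u v ->
  [\/ [/\ layer u = 0, Sv u = set0, layer v = 1 & #|Sv v| = k],
      [/\ layer u = 1, #|Sv u| = k, layer v = 2, #|Sv v| = k.*2 & Sv u \subset Sv v]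
    | [/\ layer u = 2, #|Sv u| = k.*2, layer v = 3, #|Sv v| = k & Sv v \subset Sv u]]%N.
Proof.
rewrite /adj /valid_vtx => /and3P[+ + /or3P[/andP[/eqP lu /eqP lv]
  | /and3P[/eqP lu /eqP lv uv] | /and3P[/eqP lu /eqP lv vu]]];
  rewrite lu lv => /eqP Su /eqP Sv; [exact: Or31 | exact: Or32 | exact: Or33].
Qed.

Lemma reach_layer u v : reach k u v ->
  u = v \/ (layer u < layer v)%N /\ (layer u = 1 -> layer v = 2 -> Sv u \subset Sv v)%N.
Proof.
move: v; apply: connect_invariant; first by left.
move=> y z IH /adj_cases[[ly _ lz _] | [ly _ lz _ yz] | [ly _ lz _ _]]; right;
  (case: IH => [-> | [lt _]]; [rewrite ly | rewrite ly in lt]); rewrite lz;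
  split=> [|? ?]; by [| lia].
Qed.

Lemma reach_same_layer u v : reach k u v -> layer u = layer v -> u = v.
Proof. by case/reach_layer => [// | [lt _] eq_l]; move: lt; rewrite eq_l ltnn. Qed.

Lemma reach_subset u v : reach k u v -> layer u = 1%N -> layer v = 2%N ->
  Sv u \subset Sv v.
Proof. by case/reach_layer => [-> -> // | [_]]; apply. Qed.

Lemma edge_L1 f : elayer f = 1%N -> [/\ layer (tail f) = 0%N, Sv (tail f) = set0 & #|Se f| = k].
Proof. by rewrite /elayer /Se; case: (adj_cases (valP f)) => -[] // + + ->. Qed.

Lemma edge_L2 f : elayer f = 2%N ->
  [/\ layer (tail f) = 1%N, #|Sv (tail f)| = k & Sv (tail f) \subset Se f].
Proof. by rewrite /elayer /Se; case: (adj_cases (valP f)) => -[] // + + ->. Qed.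

Lemma edge_L3 f : elayer f = 3%N ->
  [/\ layer (tail f) = 2%N, #|Sv (tail f)| = k.*2, #|Se f| = k & Se f \subset Sv (tail f)].
Proof. by rewrite /elayer /Se; case: (adj_cases (valP f)) => -[] // + + ->. Qed.

Lemma elayer_cases f : [\/ elayer f = 1, elayer f = 2 | elayer f = 3]%N.
Proof. by rewrite /elayer; case: (adj_cases (valP f)) => -[_ _ ->]; constructor. Qed.

Lemma vtx_eq u v : layer u = layer v -> Sv u = Sv v -> u = v.
Proof. by case: u v => [i U] [j V] /val_inj /= -> /= ->. Qed.

Lemma edge_eq f g : tail f = tail g -> Defs.head f = Defs.head g -> f = g.
Proof.
case: f g => [[u v] ?] [[u' v'] ?]; rewrite /tail /Defs.head /= => eq_u eq_v.
by apply: val_inj; rewrite /= eq_u eq_v.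
Qed.

Lemma L1_edge_inj f g : elayer f = 1%N -> elayer g = 1%N -> Se f = Se g -> f = g.
Proof.
move=> lf lg eqS; have [tf Sf _] := edge_L1 lf; have [tg Sg _] := edge_L1 lg.
by apply: edge_eq; apply: vtx_eq; rewrite ?tf ?tg ?Sf ?Sg -?/(elayer _) ?lf ?lg.
Qed.

Lemma L2_edge_inj f g : elayer f = 2%N -> elayer g = 2%N ->
  Defs.head f = Defs.head g -> Sv (tail f) = Sv (tail g) -> f = g.
Proof.
move=> lf lg eq_head eq_tail; have [tf _ _] := edge_L2 lf; have [tg _ _] := edge_L2 lg.
by apply: edge_eq => //; apply: vtx_eq; rewrite ?tf ?tg.
Qed.

Lemma edge_layer_neq e f : elayer e != elayer f -> (e == f) = false.
Proof. by apply: contraNF => /eqP ->. Qed.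

Lemma inD_head e f : inD f e -> elayer f = layer (tail e) -> Defs.head f = tail e.
Proof. exact: reach_same_layer. Qed.

End Graph.

Section Loads.
Variables (R : realFieldType) (m k : nat).
Hypothesis k2_le_m : (k.*2 <= m)%N.
Implicit Types (e f : edge m k).

Definition load (i : nat) e : R := \sum_(f | elayer f == i) xa R f * xsub R f e.

Lemma sum_load e : \sum_f xa R f * xsub R f e = load 1 e + load 2 e + load 3 e.
Proof.
rewrite /load (bigID (fun f => elayer f == 1%N)) /= -addrA.
rewrite [X in _ + X](bigID (fun f => elayer f == 2%N)) /=.
congr (_ + (_ + _)); apply: eq_bigl => f.
  by case: eqP => [-> // | _].
by case: (elayer_cases f) => ->.
Qed.

Lemma load_le_xa_diag i e : (forall f, elayer f = i -> f != e -> xsub R f e = 0) ->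
  load i e <= xa R e.
Proof.
move=> xsub0; have /andP[xa_ge0 _] := xa_ge0_le1 R e.
have support f : elayer f = i -> xa R f * xsub R f e != 0 -> f = e.
  by move=> lf nz; apply/eqP; apply: contraNT nz => /(xsub0 _ lf) ->; rewrite mulr0.
apply: ler_sum_unique_support => // [f g /eqP lf /eqP lg | f /eqP lf].
  by move=> /(support _ lf) -> /(support _ lg) ->.
by move=> /(support _ lf) ->; rewrite xsub_diag mulr1.
Qed.

Lemma load3_le_xa e : load 3 e <= xa R e.
Proof. by apply: load_le_xa_diag => f lf fe; rewrite /xsub lf eq_sym (negbTE fe). Qed.

Let binR_neq0 n r : (r <= n)%N -> binR R n r != 0.
Proof. by move=> rn; rewrite pnatr_eq0 -lt0n bin_gt0. Qed.

Lemma load2_le_xa e : load 2 e <= xa R e.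
Proof.
case: (elayer_cases e) => le; last first.
  have [tl Vk _ _] := edge_L3 le; pose V := Sv (tail e).
  pose c := (binR R (m - k) k)^-1 * (binR R k.*2 k)^-1.
  have -> : load 2 e = \sum_(f | (elayer f == 2%N) && inD f e) c.
    rewrite /load big_mkcondr; apply: eq_bigr => f /eqP lf.
    rewrite /xsub /xa lf edge_layer_neq ?le ?lf //=.
    by case: (inD f e); rewrite ?mulr1 ?mulr0.
  apply: le_trans (ler_sum_inj (P := fun f => (elayer f == 2%N) && inD f e)
                     (Q := fun U => U \in [set U : {set 'I_m} | U \subset V & #|U| == k])
                     (h := fun f => Sv (tail f)) (g := fun=> c) _ _ _) _.
  - move=> f g /andP[/eqP lf Df] /andP[/eqP lg Dg]; apply: L2_edge_inj => //.
    by rewrite (inD_head Df) ?(inD_head Dg) ?lf ?lg ?tl.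
  - move=> f /andP[/eqP lf Df]; have [_ Tf Tfsub] := edge_L2 lf.
    by rewrite inE Tf eqxx andbT /V -(inD_head Df) ?lf ?tl.
  - by move=> U _; rewrite mulr_ge0 // invr_ge0 ler0n.
  rewrite sumr_const cards_draws Vk -mulr_natr -/(binR R k.*2 k) /c /xa le.
  by rewrite -mulrA mulVf ?mulr1 // binR_neq0 // -addnn leq_addr.
all: apply: load_le_xa_diag => f lf fe.
all: by rewrite /xsub lf eq_sym (negbTE fe) le.
Qed.

Lemma load1_le_xa e : load 1 e <= xa R e.
Proof.
case: (elayer_cases e) => le.
- apply: load_le_xa_diag => f lf fe.
  by rewrite /xsub lf eq_sym (negbTE fe) le; case: (inD f e).
- have [tl _ _] := edge_L2 le.
  have -> : load 1 e = \sum_(f | (elayer f == 1%N) && inD f e) xa R e.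
    rewrite /load big_mkcondr; apply: eq_bigr => f /eqP lf.
    rewrite /xsub /xa lf edge_layer_neq ?le ?lf //=.
    by case: (inD f e); rewrite ?mulr0.
  apply: ler_sum_unique_support => [|f g /andP[/eqP lf Df] /andP[/eqP lg Dg] _ _|//].
    by have /andP[] := xa_ge0_le1 R e.
  apply: L1_edge_inj => //.
  by rewrite /Se (inD_head Df) ?(inD_head Dg) ?lf ?lg ?tl.
have [tl Vk Wk WV] := edge_L3 le; pose V := Sv (tail e); pose W := Se e.
pose g (U : {set 'I_m}) : R :=
  (binR R m k)^-1 * (binR R (m - k.*2 + #|U :&: W|) #|U :&: W|)^-1.
have -> : load 1 e = \sum_(f | (elayer f == 1%N) && inD f e) g (Se f).
  rewrite /load big_mkcondr; apply: eq_bigr => f /eqP lf.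
  rewrite /xsub /xa lf edge_layer_neq ?le ?lf //=.
  case: (inD f e); rewrite ?mulr0 // /g setIC mulrA mulKf ?binR_neq0 //.
  by rewrite leq_subRL ?addnn // (leq_trans _ k2_le_m) // -addnn leq_addr.
apply: le_trans (ler_sum_inj (P := fun f => (elayer f == 1%N) && inD f e)
                   (Q := fun U : {set 'I_m} => (U \subset V) && (#|U| == k))
                   (h := @Se m k) (g := g) _ _ _) _.
- by move=> f f' /andP[/eqP lf _] /andP[/eqP lf' _]; apply: L1_edge_inj.
- move=> f /andP[/eqP lf Df]; have [_ _ ->] := edge_L1 lf; rewrite eqxx andbT.
  by apply: reach_subset Df _ tl; rewrite -/(elayer f).
- by move=> U _; rewrite mulr_ge0 // invr_ge0 ler0n.
rewrite -mulr_sumr (sum_draws_by_meet WV k (fun j => (binR R (m - k.*2 + j) j)^-1)) Wk.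
have VWk : #|V :\: W| = k by rewrite cardsD (setIidPr WV) Vk Wk -addnn addnK.
under eq_bigr do rewrite VWk -mulr_natl.
rewrite sum_bin_div_bin (_ : m - k.*2 + k + k = m)%N; last by lia.
rewrite (_ : m - k.*2 + k = m - k)%N; last by lia.
rewrite /xa le mulrA mulVf ?mul1r // binR_neq0 //.
by rewrite (leq_trans _ k2_le_m) // -addnn leq_addr.
Qed.

End Loads.

Theorem lemma4 (R : realFieldType) (m k : nat) :
  (0 < k)%N -> (k.*2 <= m)%N ->
  forall e : edge m k,
    xa R e <= s_prob R e <= 6 * xa R e.
Proof.
move=> _ k2_le_m e; apply/andP; split; first exact: xa_le_s_prob.
apply: le_trans (s_prob_le_sum R e) _; rewrite sum_load.
have := load1_le_xa R k2_le_m e; have := load2_le_xa R e; have := load3_le_xa R e.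
have /andP[xa_ge0 _] := xa_ge0_le1 R e.
lra.
Qed.
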